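(* Let $G$ be a finite group and $p$ a prime dividing $|G|$. Let $S^{\min}_{G/G}$ be the smallest covering sieve on $G/G$ for the sipp topology on $\mathcal{O}(G)$, viewed as a presheaf of sets on $\mathcal{O}(G)$. Then its restriction to $\mathcal{O}_p(G)$ is a terminal object of $\mathrm{PSh}(\mathcal{O}_p(G))$, and its restriction to $\mathcal{O}^{\circ}_p(G)$ is a terminal object of $\mathrm{PSh}(\mathcal{O}^{\circ}_p(G))$.
   Context: $\mathcal{O}(G)$ is the category of orbits $G/H$ and $G$-maps; $\mathcal{O}_p(G)$ (resp. $\mathcal{O}^{\circ}_p(G)$) its full subcategory on $G/Q$ with $Q$ a $p$-subgroup (resp. non-trivial $p$-subgroup). A sieve on $x$ is a set of morphisms with codomain $x$ closed under precomposition, equivalently a subfunctor of $\mathrm{Hom}(-,x)$. The sipp topology: a sieve on $G/H$ is covering iff it contains the projection $G/P_H\to G/H$ for a Sylow $p$-subgroup $P_H$ of $H$. $\mathrm{PSh}$ denotes presheaves of sets. *)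

From mathcomp Require Import all_boot all_fingroup all_solvable.

Set Implicit Arguments.
Unset Strict Implicit.
Unset Printing Implicit Defensive.

Local Open Scope group_scope.

Section OrbitCategory.
Variables (gT : finGroupType) (G : {group gT}).

(* The orbit G/H is modelled as the set [lcosets H G] of left cosets xH,
   x in G, with G acting by left multiplication g.(xH) = (gx)H.
   A G-map G/H -> G/K is a finite function on sets of elements that maps
   G/H equivariantly into G/K, and is normalised to set0 outside G/H
   (so that equality of G-maps is plain equality). *)
Definition Gmap_ff := {ffun {set gT} -> {set gT}}.

Definition is_Gmap (H K : {set gT}) (f : Gmap_ff) : bool :=
  [forall C : {set gT},
     if C \in lcosets H G then
       (f C \in lcosets K G) && [forall g in G, f (g *: C) == g *: f C]
     else f C == set0].

Definition Gid (H : {set gT}) : Gmap_ff :=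
  [ffun C => if C \in lcosets H G then C else set0].
Definition Gcomp (f g : Gmap_ff) : Gmap_ff := [ffun C => f (g C)].
Definition Gproj (H K : {set gT}) : Gmap_ff :=
  [ffun C => if C \in lcosets H G then C * K else set0].

Definition Ob (ob : pred {group gT}) := {H : {group gT} | (H \subset G) && ob H}.
Definition Ohom (ob : pred {group gT}) (x y : Ob ob) :=
  {f : Gmap_ff | is_Gmap (val x) (val y) f}.

Lemma Ob_sub (ob : pred {group gT}) (x : Ob ob) : val x \subset G.
Proof. by case/andP: (valP x). Qed.

Record sieve (K : {group gT}) := Sieve {
  sv_mem :> {group gT} -> pred Gmap_ff;
  sv_hom : forall (H : {group gT}) f, sv_mem H f -> (H \subset G) && is_Gmap H K f;
  sv_closed : forall (H H' : {group gT}) (f g : Gmap_ff),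
      H' \subset G -> sv_mem H f -> is_Gmap H' H g -> sv_mem H' (Gcomp f g) }.

Definition sipp_covering (p : nat) (K : {group gT}) (S : sieve K) : Prop :=
  exists P : {group gT}, P \in 'Syl_p(K) /\ S P (Gproj P K).

Definition smallest_covering (p : nat) (K : {group gT}) (S : sieve K) : Prop :=
  sipp_covering p S /\
  forall S' : sieve K, sipp_covering p S' ->
    forall (H : {group gT}) f, S H f -> S' H f.

Record psh_data (ob : pred {group gT}) := PshData {
  ps_ob : Ob ob -> Type;
  ps_map : forall x y : Ob ob, Ohom x y -> ps_ob y -> ps_ob x }.

Definition is_presheaf (ob : pred {group gT}) (F : psh_data ob) : Prop :=
  (forall (x : Ob ob) (i : Ohom x x) (a : ps_ob F x),
      val i = Gid (val x) -> ps_map i a = a) /\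
  (forall (x y z : Ob ob) (g : Ohom x y) (f : Ohom y z) (h : Ohom x z)
          (a : ps_ob F z),
      val h = Gcomp (val f) (val g) -> ps_map h a = ps_map g (ps_map f a)).

Definition is_natural (ob : pred {group gT}) (X F : psh_data ob)
  (eta : forall x, ps_ob X x -> ps_ob F x) : Prop :=
  forall (x y : Ob ob) (f : Ohom x y) (a : ps_ob X y),
    eta x (ps_map f a) = ps_map f (eta y a).

Definition is_terminal_psh (ob : pred {group gT}) (F : psh_data ob) : Prop :=
  is_presheaf F /\
  forall X : psh_data ob, is_presheaf X ->
    (exists eta, @is_natural ob X F eta) /\
    forall eta eta', @is_natural ob X F eta -> @is_natural ob X F eta' ->
      forall x a, eta x a = eta' x a.

(* The restriction of a sieve S on G/K (viewed as a presheaf on O(G),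
   S(G/H) = morphisms G/H -> G/K in S, acting by precomposition)
   to the full subcategory [Ob ob]. *)
Definition sieve_psh (ob : pred {group gT}) (K : {group gT}) (S : sieve K)
  : psh_data ob :=
  @PshData ob (fun x => {f : Gmap_ff | S (val x) f})
    (fun x y g a => exist _ (Gcomp (val a) (val g))
                      (sv_closed (Ob_sub x) (valP a) (valP g))).

End OrbitCategory.

(* O_p(G): p-subgroups; O°_p(G): non-trivial p-subgroups. *)
Definition p_ob (gT : finGroupType) (p : nat) : pred {group gT} :=
  fun H => p.-group H.
Definition pnt_ob (gT : finGroupType) (p : nat) : pred {group gT} :=
  fun H => p.-group H && (H :!=: 1).

From mathcomp Require Import all_boot all_fingroup all_solvable.

(* G/G is a terminal object of O(G), so a sieve on G/G only records which
   orbits G/H it reaches, and this set is closed under subconjugacy since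
   G/H -> G/K exists iff H is conjugate into K.  A sipp-covering sieve
   reaches G/P for a Sylow p-subgroup P, and by Sylow's theorem every
   p-subgroup is conjugate into P; hence it reaches every p-orbit, the
   sieve of p-orbits is the smallest covering one, and on O_p(G) (or
   O°_p(G)) the sieve is the representable presheaf of the point, whose
   values are singletons. *)

Set Implicit Arguments.
Unset Strict Implicit.
Unset Printing Implicit Defensive.

Section OrbitMaps.
Local Open Scope group_scope.
Variables (gT : finGroupType) (G : {group gT}).

Lemma lcosets_self (C : {set gT}) : C \in lcosets G G -> C = G.
Proof. by case/lcosetsP=> x xG ->; rewrite lcoset_id. Qed.

Lemma set0_notin_lcosets (H : {group gT}) : set0 \notin lcosets H G.
Proof.
apply/negP; case/lcosetsP=> y _ y_H.
by move: (lcoset_refl H y); rewrite -y_H inE.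
Qed.

Lemma lcosets_lmul (H C : {set gT}) g :
  C \in lcosets H G -> g \in G -> g *: C \in lcosets H G.
Proof.
case/lcosetsP=> y yG -> gG; apply/lcosetsP.
by exists (g * y); rewrite ?groupM ?lcosetM.
Qed.

Lemma Gmap_into_GG_unique (H : {set gT}) f f' :
  is_Gmap G H G f -> is_Gmap G H G f' -> f = f'.
Proof.
move=> /forallP Gf /forallP Gf'; apply/ffunP=> C.
move: (Gf C) (Gf' C); case: ifP => _.
  by case/andP=> /lcosets_self -> _ /andP[/lcosets_self -> _].
by move=> /eqP -> /eqP ->.
Qed.

Lemma is_Gmap_comp (H K L : {group gT}) f g :
  is_Gmap G H K g -> is_Gmap G K L f -> is_Gmap G H L (Gcomp f g).
Proof.
move=> /forallP Gg /forallP Gf; apply/forallP=> C; rewrite !ffunE.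
move: (Gg C); case: ifP => [_ | _ /eqP ->]; last first.
  by move: (Gf set0); rewrite (negbTE (set0_notin_lcosets K)).
case/andP=> gC /forallP g_eqv; move: (Gf (g C)); rewrite gC.
case/andP=> -> /forallP f_eqv /=; apply/forallP=> a; apply/implyP=> aG.
by rewrite !ffunE (eqP (implyP (g_eqv a) aG)) (implyP (f_eqv a) aG).
Qed.

(* The G-map G/H -> G/K, xH |-> xzK, for H :^ z \subset K. *)
Definition Gconj (H K : {set gT}) (z : gT) : Gmap_ff gT :=
  [ffun C => if C \in lcosets H G then C * (z *: K) else set0].

Lemma lcoset_mul_conj (H K : {group gT}) y z :
  H :^ z \subset K -> (y *: H) * (z *: K) = (y * z) *: K.
Proof.
move=> sHzK.
have Hz : H * [set z] = z *: (H :^ z).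
  by rewrite conjsgE mulgA mulg_set1 mulgV -set1gE mul1g.
have HzK : (H :^ z) * K = K by rewrite -[H :^ z]/(gval (H :^ z)%G) mulSGid.
by rewrite -!mulgA (mulgA H) Hz -!mulgA HzK !mulgA mulg_set1.
Qed.

Lemma is_Gmap_conj (H K : {group gT}) z :
  z \in G -> H :^ z \subset K -> is_Gmap G H K (Gconj H K z).
Proof.
move=> zG sHzK; apply/forallP=> C; rewrite ffunE.
case CH: (C \in lcosets H G) => //; apply/andP; split.
  case/lcosetsP: CH => y yG ->; rewrite lcoset_mul_conj //.
  by apply/lcosetsP; exists (y * z); rewrite ?groupM.
apply/forallP=> a; apply/implyP=> aG.
by rewrite ffunE lcosets_lmul // -!mulgA.
Qed.

Lemma is_Gmap_proj (H K : {group gT}) :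
  H \subset K -> is_Gmap G H K (Gproj G H K).
Proof.
move=> sHK; have -> : Gproj G H K = Gconj H K 1.
  by apply/ffunP=> C; rewrite !ffunE lcoset1.
by apply: is_Gmap_conj; rewrite ?group1 ?conjsg1.
Qed.

Lemma Gmap_subconj (H K : {group gT}) f :
  H \subset G -> is_Gmap G H K f -> exists2 y, y \in G & H :^ y \subset K.
Proof.
move=> sHG /forallP Gf.
have HH : (H : {set gT}) \in lcosets H G.
  by apply/lcosetsP; exists 1; rewrite ?group1 ?lcoset1.
move: (Gf H); rewrite HH => /andP[/lcosetsP[y yG fH] /forallP f_eqv].
exists y => //; apply/subsetP=> _ /imsetP[h hH ->].
have hG : h \in G by apply: (subsetP sHG).
move: (implyP (f_eqv h) hG); rewrite lcoset_id // fH -lcosetM => /eqP hyK.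
have : h * y \in y *: K by rewrite hyK lcoset_refl.
by rewrite mem_lcoset conjgE mulgA.
Qed.

Lemma Gmap_pgroup p (H K : {group gT}) f :
  H \subset G -> is_Gmap G H K f -> p.-group K -> p.-group H.
Proof.
move=> sHG /(Gmap_subconj sHG)[y _ sHyK] pK.
by rewrite -(pgroupJ p H y) (pgroupS sHyK).
Qed.

End OrbitMaps.

Section SippSieves.
Local Open Scope group_scope.
Variables (gT : finGroupType) (G : {group gT}) (p : nat).

Definition p_orbit_mem (H : {group gT}) (f : Gmap_ff gT) : bool :=
  [&& H \subset G, is_Gmap G H G f & p.-group H].

Lemma p_orbit_mem_hom (H : {group gT}) f :
  p_orbit_mem H f -> (H \subset G) && is_Gmap G H G f.
Proof. by case/and3P=> -> ->. Qed.

Lemma p_orbit_mem_closed (H H' : {group gT}) f g :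
  H' \subset G -> p_orbit_mem H f -> is_Gmap G H' H g ->
  p_orbit_mem H' (Gcomp f g).
Proof.
move=> sH'G /and3P[_ Gf pH] Gg.
by rewrite /p_orbit_mem sH'G (is_Gmap_comp Gg Gf) (Gmap_pgroup sH'G Gg pH).
Qed.

Definition p_orbit_sieve : sieve G G :=
  Sieve p_orbit_mem_hom p_orbit_mem_closed.

Lemma p_orbit_sieve_covering : sipp_covering p p_orbit_sieve.
Proof.
have [P sylP] := Sylow_exists p G; have sPG := pHall_sub sylP.
exists P; split; first by rewrite inE.
by rewrite /= /p_orbit_mem sPG (pHall_pgroup sylP) is_Gmap_proj.
Qed.

Lemma sipp_covering_p_orbits (S : sieve G G) (H : {group gT}) f :
  sipp_covering p S -> H \subset G -> p.-group H -> is_Gmap G H G f -> S H f.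
Proof.
case=> P [sylP SP] sHG pH Gf; rewrite inE in sylP.
have [z zG sHzP] := Sylow_Jsub sylP sHG pH.
have /andP[_ GP] := sv_hom SP.
have GconjP := is_Gmap_conj zG sHzP.
rewrite (Gmap_into_GG_unique Gf (is_Gmap_comp GconjP GP)).
exact: sv_closed sHG SP GconjP.
Qed.

Lemma p_orbit_sieve_smallest : smallest_covering p p_orbit_sieve.
Proof.
split=> [|S covS H f /and3P[sHG Gf pH]]; first exact: p_orbit_sieve_covering.
exact: sipp_covering_p_orbits.
Qed.

Lemma terminal_psh_of_singletons (ob : pred {group gT}) (F : psh_data G ob) :
  (forall x, ps_ob F x) -> (forall x (a b : ps_ob F x), a = b) ->
  is_terminal_psh F.
Proof.
move=> pt uniqF; split; first by split=> *; apply: uniqF.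
move=> X _; split=> [|*]; last exact: uniqF.
by exists (fun x _ => pt x) => ????; apply: uniqF.
Qed.

Lemma sieve_psh_terminal (ob : pred {group gT}) (S : sieve G G) :
  sipp_covering p S -> (forall H, ob H -> p.-group H) ->
  is_terminal_psh (sieve_psh ob S).
Proof.
move=> covS ob_p; apply: terminal_psh_of_singletons => [x | x [f Sf] [g Sg]].
  have sxG := Ob_sub x; have px : p.-group (val x).
    by apply: ob_p; case/andP: (valP x).
  have Gx := is_Gmap_proj G sxG.
  exact: (exist _ (Gproj G (val x) G) (sipp_covering_p_orbits covS sxG px Gx)).
have /andP[_ Gf] := sv_hom Sf; have /andP[_ Gg] := sv_hom Sg.
move: Sg; rewrite -(Gmap_into_GG_unique Gf Gg) => Sg.
by rewrite (bool_irrelevance Sf Sg).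
Qed.

End SippSieves.

Theorem lemma4p4p1 (gT : finGroupType) (G : {group gT}) (p : nat) :
  prime p -> p %| #|G| ->
  (exists S : sieve G G, smallest_covering p S) /\
  forall S : sieve G G, smallest_covering p S ->
    is_terminal_psh (@sieve_psh gT G (@p_ob gT p) G S) /\
    is_terminal_psh (@sieve_psh gT G (@pnt_ob gT p) G S).
Proof.
move=> _ _; split.
  by exists (p_orbit_sieve G p); exact: p_orbit_sieve_smallest.
move=> S [covS _]; split; apply: (sieve_psh_terminal covS) => // H.
by case/andP.
Qed.
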